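(* Let $R \xrightarrow{\tau} A \xrightarrow{\lambda} C \xrightarrow{g_C} B$ be ring morphisms and put $g := g_C\circ\lambda : A \to B$. Regard $C$ as an $R$-algebra via $\lambda\circ\tau$. Then $A^*_{B,R} \subseteq C^*_{B,R}$, where $A^*_{B,R}$ is the Lipschitz saturation of $A$ in $B$ relative to $R \xrightarrow{\tau} A \xrightarrow{g} B$ and $C^*_{B,R}$ is the Lipschitz saturation of $C$ in $B$ relative to $R \xrightarrow{\lambda\circ\tau} C \xrightarrow{g_C} B$.
   Context: All rings are commutative with identity. For a sequence of ring morphisms $R \to A' \xrightarrow{h} B$, let $\varphi: B\otimes_R B \to B \otimes_{A'} B$ be the canonical $R$-algebra morphism $x\otimes_R y \mapsto x \otimes_{A'} y$, and let $\Delta: B \to B\otimes_R B$, $\Delta(b) = b\otimes_R 1 - 1 \otimes_R b$. The Lipschitz saturation of $A'$ in $B$ relative to $R\to A'\to B$ is $(A')^*_{B,R} := \{x \in B \mid \Delta(x) \in \overline{\ker\varphi}\}$, where for an ideal $I$ of a ring $S$, $\overline{I}$ denotes the integral closure of $I$: the set of $u\in S$ satisfying $u^n + a_1u^{n-1}+\cdots+a_n = 0$ for some $n\ge 1$ and $a_i \in I^i$. *)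

(* Commutative rings with identity (zero ring allowed):
   comPzRingType; ring morphisms: {rmorphism _ -> _}. *)
From HB Require Import structures.
From mathcomp Require Import all_boot all_order all_algebra.
Set Implicit Arguments. Unset Strict Implicit. Unset Printing Implicit Defensive.
Import GRing.Theory.
Local Open Scope ring_scope.

(* The tensor product B (x)_{A'} B of an A'-algebra B (structure map
   h : A' -> B), given by its universal property: it is the pushout of
   h along h in the category of commutative rings, i.e. a ring T with
   i1 (b) = b (x) 1 and i2 (b) = 1 (x) b. *)
Record tensor_data (A' B : comPzRingType) (h : {rmorphism A' -> B}) := TensorData {
  td_T :> comPzRingType;
  td_i1 : {rmorphism B -> td_T};
  td_i2 : {rmorphism B -> td_T};
  td_comm : forall a, td_i1 (h a) = td_i2 (h a);
  td_univ : forall (S : comPzRingType) (u1 u2 : {rmorphism B -> S}),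
    (forall a, u1 (h a) = u2 (h a)) ->
    exists w : {rmorphism td_T -> S},
      [/\ (forall b, w (td_i1 b) = u1 b), (forall b, w (td_i2 b) = u2 b) &
          forall w' : {rmorphism td_T -> S},
            (forall b, w' (td_i1 b) = u1 b) -> (forall b, w' (td_i2 b) = u2 b) ->
            forall t, w' t = w t]
}.

Fixpoint ideal_pow (S : comPzRingType) (I : S -> Prop) (k : nat) (x : S) : Prop :=
  match k with
  | 0 => True
  | k'.+1 => exists s : seq (S * S),
      (forall p, p \in s -> I p.1 /\ ideal_pow I k' p.2) /\
      x = \sum_(p <- s) p.1 * p.2
  end.

Definition int_closure (S : comPzRingType) (I : S -> Prop) (u : S) : Prop :=
  exists n : nat, (0 < n)%N /\ exists a : nat -> S,
    (forall i, (1 <= i <= n)%N -> ideal_pow I i (a i)) /\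
    u ^+ n + \sum_(1 <= i < n.+1) a i * u ^+ (n - i) = 0.

(* Lipschitz saturation of A' in B relative to R -> A' -h-> B, where
   fR : R -> B is the composite structure map, TR = B (x)_R B and
   TA = B (x)_{A'} B.  phi is the canonical map x (x)_R y |-> x (x)_{A'} y
   (i.e. the unique ring morphism with phi o i1 = i1, phi o i2 = i2). *)
Definition lipschitz_saturation (R A' B : comPzRingType)
  (fR : {rmorphism R -> B}) (h : {rmorphism A' -> B})
  (TR : tensor_data fR) (TA : tensor_data h) (x : B) : Prop :=
  forall phi : {rmorphism td_T TR -> td_T TA},
    (forall b, phi (td_i1 TR b) = td_i1 TA b) ->
    (forall b, phi (td_i2 TR b) = td_i2 TA b) ->
    int_closure (fun t => phi t = 0) (td_i1 TR x - td_i2 TR x).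

From HB Require Import structures.
From mathcomp Require Import all_boot all_order all_algebra.
Import GRing.Theory.
Local Open Scope ring_scope.

(* Since [g] factors through [C], the canonical map [B (x)_R B -> B (x)_C B]
   factors through [B (x)_A B].  Hence the kernel of [B (x)_R B -> B (x)_A B]
   lies in the kernel of [B (x)_R B -> B (x)_C B], and integral closure of
   ideals is monotone. *)

Lemma ideal_pow_sub (S : comPzRingType) (I J : S -> Prop) :
  (forall t, I t -> J t) -> forall k x, ideal_pow I k x -> ideal_pow J k x.
Proof.
move=> IJ; elim=> [//|k IHk] x /= [s [Hs ->]].
exists s; split=> // p /Hs[Ip1 Ip2]; split; [exact: IJ | exact: IHk].
Qed.

Lemma int_closure_sub (S : comPzRingType) (I J : S -> Prop) :
  (forall t, I t -> J t) -> forall u, int_closure I u -> int_closure J u.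
Proof.
move=> IJ u [n [n_gt0 [a [Ia Eu]]]].
exists n; split=> //; exists a; split=> // i /Ia; exact: ideal_pow_sub.
Qed.

Section TensorMorphisms.

Context {A' B : comPzRingType} {h : {rmorphism A' -> B}} (T : tensor_data h).

Lemma td_morph_ext {S : comPzRingType} (w w' : {rmorphism td_T T -> S}) :
  (forall b, w (td_i1 T b) = w' (td_i1 T b)) ->
  (forall b, w (td_i2 T b) = w' (td_i2 T b)) ->
  forall t, w t = w' t.
Proof.
move=> E1 E2 t.
have comm_w a : (w \o td_i1 T)%FUN (h a) = (w \o td_i2 T)%FUN (h a).
  by rewrite /= td_comm.
have [w0 [_ _ uniq_w0]] := td_univ T comm_w.
by rewrite (uniq_w0 w) // (uniq_w0 w') // => b /=; rewrite ?E1 ?E2.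
Qed.

Lemma td_lift {A'' : comPzRingType} {h' : {rmorphism A'' -> B}}
    (T' : tensor_data h') :
  (forall a, td_i1 T' (h a) = td_i2 T' (h a)) ->
  exists psi : {rmorphism td_T T -> td_T T'},
    (forall b, psi (td_i1 T b) = td_i1 T' b) /\
    (forall b, psi (td_i2 T b) = td_i2 T' b).
Proof. by move=> /(td_univ T)[psi [E1 E2 _]]; exists psi. Qed.

Lemma td_comm_factor {A0 : comPzRingType} {f : {rmorphism A0 -> B}}
    {k : A0 -> A'} :
  (forall a, f a = h (k a)) -> forall a, td_i1 T (f a) = td_i2 T (f a).
Proof. by move=> Ef a; rewrite Ef td_comm. Qed.

End TensorMorphisms.

Theorem mainTheorem2 (R A C B : comPzRingType)
  (tau : {rmorphism R -> A}) (lambda : {rmorphism A -> C})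
  (gC : {rmorphism C -> B}) (g : {rmorphism A -> B})
  (fR : {rmorphism R -> B})
  (hg : forall a, g a = gC (lambda a))
  (hfR : forall r, fR r = g (tau r))
  (TR : tensor_data fR) (TA : tensor_data g) (TC : tensor_data gC) :
  forall x : B, lipschitz_saturation TR TA x -> lipschitz_saturation TR TC x.
Proof.
move=> x satA phi phi1 phi2.
have [phiA [phiA1 phiA2]] := td_lift TR TA (td_comm_factor TA hfR).
have [psi [psi1 psi2]] := td_lift TA TC (td_comm_factor TC hg).
have phi_factor t : phi t = psi (phiA t).
  apply: (td_morph_ext TR phi (psi \o phiA)%FUN) => b /=.
    by rewrite phi1 phiA1 psi1.
  by rewrite phi2 phiA2 psi2.
apply: int_closure_sub (satA phiA phiA1 phiA2) => t kerA_t.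
by rewrite phi_factor kerA_t rmorph0.
Qed.
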